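(* Every tree (in which every nontrivial pseudo-supremum is a supremum) that is $\mathbb{R}$-special and collectionwise Hausdorff in the interval topology is perfect, i.e. every closed subset is a $G_\delta$.
   Context: A tree is a partially ordered set in which the set of predecessors of each element is well-ordered. For a nonempty chain bounded above, its pseudo-supremum is the set of its minimal upper bounds; standing assumption: each such set is a singleton. A tree $T$ is $\mathbb{R}$-special if there is a function $f\colon T\to\mathbb{R}$ with $p<q\Rightarrow f(p)<f(q)$. The interval topology has as base all sets $(s,t]=\{x:s<x\le t\}$ together with all singletons $\{t\}$ with $t$ minimal. Collectionwise Hausdorff: every closed discrete set $D$ expands to a pairwise disjoint family of open sets $\{U_d:d\in D\}$ with $d\in U_d$. *)

From Stdlib Require Import Reals.
Open Scope R_scope.

Section Trees.
Variable T : Type.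
Variable le : T -> T -> Prop.

Definition lt (x y : T) : Prop := le x y /\ x <> y.

Definition is_partial_order : Prop :=
  (forall x, le x x) /\
  (forall x y, le x y -> le y x -> x = y) /\
  (forall x y z, le x y -> le y z -> le x z).

Definition preds_well_ordered : Prop :=
  forall (t : T) (S : T -> Prop),
    (forall s, S s -> lt s t) -> (exists s, S s) ->
    exists m, S m /\ forall s, S s -> le m s.

Definition is_tree : Prop := is_partial_order /\ preds_well_ordered.

Definition chain (C : T -> Prop) : Prop :=
  forall x y, C x -> C y -> le x y \/ le y x.

Definition upper_bound (C : T -> Prop) (u : T) : Prop :=
  forall c, C c -> le c u.

(* minimal upper bounds = members of the pseudo-supremum of C *)
Definition minimal_upper_bound (C : T -> Prop) (u : T) : Prop :=
  upper_bound C u /\ ~ (exists v, upper_bound C v /\ lt v u).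

Definition pseudo_sup_singleton : Prop :=
  forall C : T -> Prop, chain C -> (exists c, C c) -> (exists u, upper_bound C u) ->
    exists u, minimal_upper_bound C u /\
      forall v, minimal_upper_bound C v -> v = u.

Definition R_special : Prop :=
  exists f : T -> R, forall p q, lt p q -> f p < f q.

Definition minimal_elt (t : T) : Prop := ~ (exists s, lt s t).

Definition basic_open (B : T -> Prop) : Prop :=
  (exists s t, forall x, B x <-> (lt s x /\ le x t)) \/
  (exists t, minimal_elt t /\ forall x, B x <-> x = t).

Definition is_open (U : T -> Prop) : Prop :=
  forall x, U x -> exists B, basic_open B /\ B x /\ forall y, B y -> U y.

Definition is_closed (F : T -> Prop) : Prop :=
  is_open (fun x => ~ F x).

Definition closed_discrete (D : T -> Prop) : Prop :=
  is_closed D /\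
  forall d, D d -> exists V, is_open V /\ V d /\
    forall y, V y -> D y -> y = d.

Definition collectionwise_Hausdorff : Prop :=
  forall D : T -> Prop, closed_discrete D ->
    exists U : T -> (T -> Prop),
      (forall d, D d -> is_open (U d) /\ U d d) /\
      (forall d d', D d -> D d' -> d <> d' -> forall x, ~ (U d x /\ U d' x)).

Definition G_delta (F : T -> Prop) : Prop :=
  exists G : nat -> (T -> Prop),
    (forall n, is_open (G n)) /\ forall x, F x <-> forall n, G n x.

Definition perfect : Prop :=
  forall F : T -> Prop, is_closed F -> G_delta F.

End Trees.

(** Fix a strictly increasing [f : T -> R] and a closed set [F].  Call [x] clear
    above a rational [q] when [f x > q] and the part of the segment below [x] at
    levels [>= q] misses [F].  The points of [F] adherent to the clear points form
    an antichain, hence a closed discrete set, so collectionwise Hausdorffness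
    separates them by disjoint open sets [U d].  The open set [cover q n] -- the
    interior of the non-clear points together with the intervals [(y, d]] inside
    [U d] on which [f] comes within [1/(n+1)] of its supremum below [d] -- contains
    [F].  A point [x] outside [F] is clear above some rational [q]; if it were in
    every [cover q n], all these intervals would hang below a single [d], yet
    between [x] and [d] lies a clear point whose [f]-value exceeds [f x] by a fixed
    amount.  Hence [F] is the intersection of the countably many [cover q n]. *)

From Stdlib Require Import Reals Lra Lia Classical ClassicalEpsilon.
From Stdlib Require Cantor.

Set Implicit Arguments.
Open Scope R_scope.

Lemma inv_INR_S_lt (eps : R) : 0 < eps -> exists n, / INR (S n) < eps.
Proof.
  intros Heps.
  destruct (archimed_cor1 eps Heps) as [[| n] [Hn Hpos]]; [lia |].
  exists n; exact Hn.
Qed.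

Definition qenum (k : nat) : R :=
  let '(k1, m) := Cantor.of_nat k in
  let '(a, b) := Cantor.of_nat k1 in
  (INR a - INR b) / INR (S m).

Lemma qenum_dense (u v : R) : u < v -> exists k, u < qenum k < v.
Proof.
  intros Huv.
  destruct (inv_INR_S_lt (eps := v - u)) as [m Hm]; [lra |].
  set (c := INR (S m)) in *.
  assert (Hc : 0 < c) by (apply lt_0_INR; lia).
  set (p := up (u * c)).
  destruct (archimed (u * c)) as [Hp1 Hp2]; fold p in Hp1, Hp2.
  exists (Cantor.to_nat (Cantor.to_nat (Z.to_nat p, Z.to_nat (- p)), m)).
  unfold qenum; rewrite !Cantor.cancel_of_to; fold c.
  replace (INR (Z.to_nat p) - INR (Z.to_nat (- p))) with (IZR p)
    by (rewrite !INR_IZR_INZ, <- minus_IZR; f_equal; lia).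
  split.
  - apply (Rmult_lt_reg_r c); [exact Hc |].
    unfold Rdiv; rewrite Rmult_assoc, Rinv_l; lra.
  - apply (Rmult_lt_reg_r c); [exact Hc |].
    unfold Rdiv; rewrite Rmult_assoc, Rinv_l by lra.
    apply (Rmult_lt_compat_r c) in Hm; [| exact Hc].
    rewrite Rinv_l in Hm by lra; lra.
Qed.

Lemma G_delta_of_double_sequence (T : Type) (le : T -> T -> Prop)
    (G : nat -> nat -> T -> Prop) (F : T -> Prop) :
  (forall k n, is_open T le (G k n)) ->
  (forall x, F x <-> forall k n, G k n x) ->
  G_delta T le F.
Proof.
  intros G_open HF.
  exists (fun i => let '(k, n) := Cantor.of_nat i in G k n); split.
  - intros i; destruct (Cantor.of_nat i) as [k n]; apply G_open.
  - intros x; rewrite HF; split.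
    + intros Hx i; destruct (Cantor.of_nat i) as [k n]; apply Hx.
    + intros Hx k n.
      specialize (Hx (Cantor.to_nat (k, n))); rewrite Cantor.cancel_of_to in Hx.
      exact Hx.
Qed.

Section Tree.

Variables (T : Type) (le : T -> T -> Prop).
Hypothesis tree : is_tree T le.

Local Notation "x ≼ y" := (le x y) (at level 70).
Local Notation "x ≺ y" := (lt T le x y) (at level 70).

Lemma le_refl x : x ≼ x.
Proof. apply tree. Qed.

Lemma le_antisym x y : x ≼ y -> y ≼ x -> x = y.
Proof. apply tree. Qed.

Lemma le_trans x y z : x ≼ y -> y ≼ z -> x ≼ z.
Proof. apply tree. Qed.

Lemma le_lt_trans x y z : x ≼ y -> y ≺ z -> x ≺ z.
Proof.
  intros Hxy [Hyz Hne]; split; [exact (le_trans Hxy Hyz) |].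
  intros ->; apply Hne, le_antisym; assumption.
Qed.

Lemma le_lt_or_eq x y : x ≼ y -> x ≺ y \/ x = y.
Proof.
  intros Hxy; destruct (classic (x = y)) as [-> | Hne]; [right | left]; auto.
  split; assumption.
Qed.

Lemma below_comparable a b x : a ≼ x -> b ≼ x -> a ≼ b \/ b ≼ a.
Proof.
  intros Hax Hbx.
  destruct (le_lt_or_eq Hax) as [Ha | ->]; [| right; exact Hbx].
  destruct (le_lt_or_eq Hbx) as [Hb | ->]; [| left; exact Hax].
  destruct (proj2 tree x (fun s => s = a \/ s = b)) as [m [[-> | ->] Hm]].
  - intros s [-> | ->]; assumption.
  - exists a; left; reflexivity.
  - left; apply Hm; right; reflexivity.
  - right; apply Hm; left; reflexivity.
Qed.

Definition interior (U : T -> Prop) (x : T) : Prop :=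
  exists B, basic_open T le B /\ B x /\ forall y, B y -> U y.

Lemma interior_sub U x : interior U x -> U x.
Proof. intros (B & _ & Bx & BU); exact (BU x Bx). Qed.

Lemma open_interior U : is_open T le (interior U).
Proof.
  intros x (B & HB & Bx & BU).
  exists B; repeat split; [exact HB | exact Bx |].
  intros y By; exists B; auto.
Qed.

Lemma basic_open_open B : basic_open T le B -> is_open T le B.
Proof. intros HB x Bx; exists B; auto. Qed.

Lemma interior_of_interval U s x : s ≺ x ->
  (forall y, s ≺ y -> y ≼ x -> U y) -> interior U x.
Proof.
  intros Hsx HU; exists (fun y => s ≺ y /\ y ≼ x); repeat split.
  - left; exists s, x; reflexivity.
  - apply Hsx.
  - apply Hsx.
  - apply le_refl.
  - intros y [Hsy Hyx]; exact (HU y Hsy Hyx).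
Qed.

Lemma interior_of_minimal U x : ~ (exists s, s ≺ x) -> U x -> interior U x.
Proof.
  intros Hmin Ux; exists (fun y => y = x); repeat split.
  - right; exists x; split; [exact Hmin | reflexivity].
  - intros y ->; exact Ux.
Qed.

Lemma interior_below x : interior (fun y => y ≼ x) x.
Proof.
  destruct (classic (exists s, s ≺ x)) as [[s Hsx] | Hmin].
  - apply (interior_of_interval _ Hsx); intros y _ Hyx; exact Hyx.
  - apply (interior_of_minimal _ Hmin), le_refl.
Qed.

Lemma open_interval_below U x s : is_open T le U -> U x -> s ≺ x ->
  exists r, r ≺ x /\ forall z, r ≺ z -> z ≼ x -> U z.
Proof.
  intros U_open Ux Hsx.
  destruct (U_open x Ux) as (B & [[r [t HB]] | [t [Hmin HB]]] & Bx & BU).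
  - destruct (proj1 (HB x) Bx) as [Hrx Hxt].
    exists r; split; [exact Hrx |].
    intros z Hrz Hzx; apply BU, HB; split; [exact Hrz | exact (le_trans Hzx Hxt)].
  - apply (proj1 (HB x)) in Bx; subst t.
    exfalso; apply Hmin; exists s; exact Hsx.
Qed.

Lemma antichain_closed_discrete D :
  (forall a b, D a -> D b -> a ≼ b -> a = b) -> closed_discrete T le D.
Proof.
  intros D_anti; split.
  - intros x Dx.
    destruct (classic (exists d, D d /\ d ≺ x)) as [[d [Dd Hdx]] | Hno].
    + apply (interior_of_interval _ Hdx).
      intros y [Hdy Hne] _ Dy; exact (Hne (D_anti d y Dd Dy Hdy)).
    + destruct (interior_below x) as (B & HB & Bx & Bbelow).
      exists B; repeat split; [exact HB | exact Bx |].
      intros y By Dy; destruct (le_lt_or_eq (Bbelow y By)) as [Hyx | ->].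
      * apply Hno; exists y; split; assumption.
      * exact (Dx Dy).
  - intros d Dd; destruct (interior_below d) as (B & HB & Bd & Bbelow).
    exists B; repeat split; [exact (basic_open_open HB) | exact Bd |].
    intros y By Dy; exact (D_anti y d Dy Dd (Bbelow y By)).
Qed.

Section Special.

Variable f : T -> R.
Hypothesis f_strict : forall p q, p ≺ q -> f p < f q.

Lemma f_mono p q : p ≼ q -> f p <= f q.
Proof.
  intros Hpq; destruct (le_lt_or_eq Hpq) as [Hlt | ->]; [left; auto | right; auto].
Qed.

Lemma below_lt_of_f_lt a b x : a ≼ x -> b ≼ x -> f a < f b -> a ≺ b.
Proof.
  intros Hax Hbx Hf; destruct (below_comparable Hax Hbx) as [Hab | Hba].
  - split; [exact Hab | intros ->; lra].
  - pose proof (f_mono Hba); lra.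
Qed.

Lemma f_sup_below_approx z s eps : s ≺ z -> 0 < eps ->
  exists y, y ≺ z /\ forall w, w ≺ z -> f w < f y + eps.
Proof.
  intros Hsz Heps.
  set (E := fun r => exists w, w ≺ z /\ r = f w).
  assert (E_bound : bound E).
  { exists (f z); intros r [w [Hwz ->]]; left; auto. }
  assert (E_inhabited : exists r, E r) by (exists (f s), s; split; auto).
  destruct (completeness E E_bound E_inhabited) as [m [m_ub m_least]].
  apply NNPP; intros Hno.
  enough (m <= m - eps) by lra.
  apply m_least; intros r [w [Hwz ->]].
  apply Rnot_lt_le; intros Hw; apply Hno.
  exists w; split; [exact Hwz |].
  intros w' Hw'z; assert (f w' <= m) by (apply m_ub; exists w'; auto); lra.
Qed.

Section Closed.

Variable F : T -> Prop.
Hypothesis F_closed : is_closed T le F.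

Definition clear_above (q : R) (x : T) : Prop :=
  q < f x /\ forall y, y ≼ x -> q <= f y -> ~ F y.

Definition adherent (q : R) (z : T) : Prop :=
  F z /\ ~ interior (fun y => ~ clear_above q y) z.

Lemma clear_above_notF q x : clear_above q x -> ~ F x.
Proof. intros [Hqx Hx]; apply Hx; [apply le_refl | lra]. Qed.

Lemma clear_above_interval_of_notF x : ~ F x ->
  exists lo, lo < f x /\ forall q, lo < q < f x -> clear_above q x.
Proof.
  intros Fx.
  destruct (classic (exists s, s ≺ x)) as [[s Hsx] | Hmin].
  - destruct (open_interval_below F_closed Fx Hsx) as [r [Hrx r_clear]].
    exists (f r); split; [auto |].
    intros q [Hrq Hqx]; split; [exact Hqx |].
    intros y Hyx Hqy; apply r_clear; [| exact Hyx].
    apply (below_lt_of_f_lt (proj1 Hrx) Hyx); lra.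
  - exists (f x - 1); split; [lra |].
    intros q [_ Hqx]; split; [exact Hqx |].
    intros y Hyx _; destruct (le_lt_or_eq Hyx) as [Hlt | ->].
    + exfalso; apply Hmin; exists y; exact Hlt.
    + exact Fx.
Qed.

Lemma adherent_not_minimal q z : adherent q z -> exists s, s ≺ z.
Proof.
  intros [Fz z_adh]; apply NNPP; intros Hmin; apply z_adh.
  apply (interior_of_minimal _ Hmin); intros z_clear; exact (clear_above_notF z_clear Fz).
Qed.

Lemma adherent_approached q z s : adherent q z -> s ≺ z ->
  exists x, clear_above q x /\ s ≺ x /\ x ≺ z.
Proof.
  intros [Fz z_adh] Hsz; apply NNPP; intros Hno; apply z_adh.
  apply (interior_of_interval _ Hsz); intros y Hsy Hyz y_clear.
  destruct (le_lt_or_eq Hyz) as [Hlt | ->].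
  - apply Hno; exists y; auto.
  - exact (clear_above_notF y_clear Fz).
Qed.

(* Clear points just below [a] lift [a] above level [q], so a clear point above [a]
   would exclude [a] from [F]. *)
Lemma adherent_antichain q a b : adherent q a -> adherent q b -> a ≼ b -> a = b.
Proof.
  intros a_adh b_adh Hab; apply NNPP; intros Hne.
  destruct (adherent_approached b_adh (conj Hab Hne)) as (x & [_ x_clear] & [Hax _] & _).
  destruct (adherent_not_minimal a_adh) as [s Hsa].
  destruct (adherent_approached a_adh Hsa) as (x' & [Hqx' _] & _ & Hx'a).
  apply (x_clear a Hax); [pose proof (f_strict Hx'a); lra | apply a_adh].
Qed.

Section Separation.

Variable U : R -> T -> T -> Prop.
Hypothesis U_open : forall q d, adherent q d -> is_open T le (U q d) /\ U q d d.
Hypothesis U_disjoint : forall q d d', adherent q d -> adherent q d' -> d <> d' ->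
  forall x, ~ (U q d x /\ U q d' x).

Definition near_sup (d : T) (n : nat) (y : T) : Prop :=
  forall w, w ≺ d -> f w < f y + / INR (S n).

Definition tail (q : R) (d : T) (n : nat) (x : T) : Prop :=
  exists y, y ≺ d /\ near_sup d n y /\ (forall z, y ≺ z -> z ≼ d -> U q d z) /\
    y ≺ x /\ x ≼ d.

Definition cover (q : R) (n : nat) (x : T) : Prop :=
  interior (fun y => ~ clear_above q y) x \/ exists d, adherent q d /\ tail q d n x.

Lemma cover_open q n : is_open T le (cover q n).
Proof.
  intros x [x_int | (d & d_adh & y & Hyd & y_near & y_U & Hyx & Hxd)].
  - destruct (open_interior x_int) as (B & HB & Bx & BU).
    exists B; repeat split; [exact HB | exact Bx |].
    intros z Bz; left; exact (BU z Bz).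
  - apply (interior_of_interval _ Hyx); intros z Hyz Hzx.
    right; exists d; split; [exact d_adh |].
    exists y; do 4 (split; [assumption |]); exact (le_trans Hzx Hxd).
Qed.

Lemma adherent_tail q d n : adherent q d -> tail q d n d.
Proof.
  intros d_adh; destruct (U_open d_adh) as [Ud_open Udd].
  destruct (adherent_not_minimal d_adh) as [s Hsd].
  destruct (open_interval_below Ud_open Udd Hsd) as [r [Hrd r_U]].
  assert (Heps : 0 < / INR (S n)) by (apply Rinv_0_lt_compat, lt_0_INR; lia).
  destruct (f_sup_below_approx Hsd Heps) as [y [Hyd y_near]].
  destruct (below_comparable (proj1 Hyd) (proj1 Hrd)) as [Hyr | Hry].
  - exists r; repeat split; try apply Hrd; try apply le_refl.
    + intros w Hwd; pose proof (f_mono Hyr); pose proof (y_near w Hwd); lra.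
    + exact r_U.
  - exists y; repeat split; try apply Hyd; try apply le_refl.
    + exact y_near.
    + intros z Hyz; apply r_U, (le_lt_trans Hry Hyz).
Qed.

Lemma F_sub_cover q n z : F z -> cover q n z.
Proof.
  intros Fz; destruct (classic (interior (fun y => ~ clear_above q y) z)) as [z_int | z_adh].
  - left; exact z_int.
  - right; exists z; split; [split; assumption |].
    apply adherent_tail; split; assumption.
Qed.

Lemma tail_sub_U q d n x : tail q d n x -> U q d x.
Proof. intros (y & _ & _ & y_U & Hyx & Hxd); exact (y_U x Hyx Hxd). Qed.

Lemma tail_root_unique q d d' n n' x : adherent q d -> adherent q d' ->
  tail q d n x -> tail q d' n' x -> d = d'.
Proof.
  intros d_adh d'_adh x_tail x_tail'; apply NNPP; intros Hne.
  exact (U_disjoint d_adh d'_adh Hne (conj (tail_sub_U x_tail) (tail_sub_U x_tail'))).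
Qed.

Lemma clear_above_not_cover q x : clear_above q x -> ~ (forall n, cover q n x).
Proof.
  intros x_clear x_cover.
  assert (x_tails : forall n, exists d, adherent q d /\ tail q d n x).
  { intros n; destruct (x_cover n) as [x_int | x_tail]; [| exact x_tail].
    exfalso; exact (interior_sub x_int x_clear). }
  destruct (x_tails 0%nat) as (d & d_adh & x_tail0).
  assert (d_tails : forall n, tail q d n x).
  { intros n; destruct (x_tails n) as (d' & d'_adh & x_tail).
    rewrite (tail_root_unique d_adh d'_adh x_tail0 x_tail); exact x_tail. }
  assert (Hxd : x ≺ d).
  { destruct x_tail0 as (_ & _ & _ & _ & _ & Hxd); split; [exact Hxd |].
    intros ->; exact (clear_above_notF x_clear (proj1 d_adh)). }
  destruct (adherent_approached d_adh Hxd) as (x' & _ & Hxx' & Hx'd).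
  pose proof (f_strict Hxx') as Hf.
  destruct (inv_INR_S_lt (eps := f x' - f x)) as [n Hn]; [lra |].
  destruct (d_tails n) as (y & _ & y_near & _ & Hyx & _).
  pose proof (y_near x' Hx'd); pose proof (f_strict Hyx); lra.
Qed.

End Separation.
End Closed.
End Special.
End Tree.

Theorem corollary4p32 (T : Type) (le : T -> T -> Prop) :
  is_tree T le -> pseudo_sup_singleton T le ->
  R_special T le -> collectionwise_Hausdorff T le ->
  perfect T le.
Proof.
  intros tree _ [f f_strict] cwh F F_closed.
  destruct (choice _ (fun q => cwh _ (antichain_closed_discrete tree _
              (adherent_antichain tree f_strict (F := F) (q := q)))))
    as [U U_sep].
  pose proof (fun q d => proj1 (U_sep q) d) as U_open.
  pose proof (fun q => proj2 (U_sep q)) as U_disjoint.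
  apply (G_delta_of_double_sequence (fun k n => cover le f F U (qenum k) n)).
  - intros k n; apply (cover_open tree).
  - intros x; split.
    + intros Fx k n; apply (F_sub_cover tree f_strict U U_open), Fx.
    + intros x_cover; apply NNPP; intros Fx.
      destruct (clear_above_interval_of_notF tree f f_strict F_closed x Fx)
        as (lo & Hlo & lo_clear).
      destruct (qenum_dense Hlo) as [k Hk].
      exact (clear_above_not_cover tree f_strict U_disjoint (lo_clear _ Hk) (x_cover k)).
Qed.
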